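(* Let $G=\bigl((f_j)_{j=1}^n;(\mu^{R})_{\emptyset\ne R\subseteq[n]}\bigr)$ be an $n$-resource selection game. (a) For every nonempty $R\subseteq[n]$, every two Nash equilibria $s,s'$ of $G$, every $k$ with $s_k(R)>0$ and every $k'$ with $s'_{k'}(R)>0$, we have $h^s_k=h^{s'}_{k'}$. (b) If there is no real number $h$ that is a plateau height of two distinct functions $f_j,f_{j'}$ ($j\ne j'$), then $\mu^s_j=\mu^{s'}_j$ for every $j\in[n]$ and every two Nash equilibria $s,s'$ of $G$.
   Context: Write $[n]=\{1,\ldots,n\}$ and $\mathbb{R}_{\ge}=[0,\infty)$. An $n$-resource selection game is a pair $G=\bigl((f_j)_{j=1}^n;(\mu^{R})_{\emptyset\ne R\subseteq[n]}\bigr)$ where each $f_j:\mathbb{R}_{\ge}\to\mathbb{R}$ is nondecreasing and $\mu^R\in\mathbb{R}_{\ge}$ for every nonempty $R\subseteq[n]$. A consumption profile is a map $s$ assigning to each nonempty $R\subseteq[n]$ a vector $s(R)\in\mathbb{R}_{\ge}^{[n]}$ with $s_j(R)=0$ for $j\notin R$ and $\sum_{j}s_j(R)=\mu^R$. The load of resource $j$ is $\mu^s_j=\sum_{R}s_j(R)$ and its cost is $h^s_j=f_j(\mu^s_j)$. $s$ is a Nash equilibrium if for every nonempty $R$, every $k$ with $s_k(R)>0$ and every $j\in R$, $h^s_k\le h^s_j$. A real number $h$ is a plateau height of a nondecreasing $f$ if there exist $x\ne y$ with $f(x)=f(y)=h$. *)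

(* Real numbers are modelled by an arbitrary real field R
   (the statement is purely order-algebraic). Resources [n] = 'I_n,
   nonempty subsets R of [n] = {set 'I_n} with R != set0. *)
From HB Require Import structures.
From mathcomp Require Import all_boot all_order all_algebra.
Set Implicit Arguments. Unset Strict Implicit. Unset Printing Implicit Defensive.
Import Order.TTheory GRing.Theory Num.Theory.
Local Open Scope ring_scope.

(* f : R_{>=0} -> R nondecreasing, represented as a total function R -> R
   whose values are only constrained on [0, oo). *)
Definition nondecr_nonneg (R : realFieldType) (g : R -> R) : Prop :=
  forall x y : R, 0 <= x -> x <= y -> g x <= g y.

Definition is_game (R : realFieldType) (n : nat)
  (f : 'I_n -> R -> R) (mu : {set 'I_n} -> R) : Prop :=
  (forall j, nondecr_nonneg (f j)) /\
  (forall S : {set 'I_n}, S != set0 -> 0 <= mu S).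

(* consumption profile: s S j = s_j(S); values at S = set0 are irrelevant *)
Definition is_profile (R : realFieldType) (n : nat)
  (mu : {set 'I_n} -> R) (s : {set 'I_n} -> 'I_n -> R) : Prop :=
  forall S : {set 'I_n}, S != set0 ->
    (forall j, 0 <= s S j) /\
    (forall j, j \notin S -> s S j = 0) /\
    \sum_(j < n) s S j = mu S.

Definition load (R : realFieldType) (n : nat)
  (s : {set 'I_n} -> 'I_n -> R) (j : 'I_n) : R :=
  \sum_(S : {set 'I_n} | S != set0) s S j.

Definition cost (R : realFieldType) (n : nat) (f : 'I_n -> R -> R)
  (s : {set 'I_n} -> 'I_n -> R) (j : 'I_n) : R :=
  f j (load s j).

Definition is_nash (R : realFieldType) (n : nat) (f : 'I_n -> R -> R)
  (mu : {set 'I_n} -> R) (s : {set 'I_n} -> 'I_n -> R) : Prop :=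
  is_profile mu s /\
  forall S : {set 'I_n}, S != set0 ->
    forall k j : 'I_n, 0 < s S k -> j \in S -> cost f s k <= cost f s j.

Definition plateau_height (R : realFieldType) (g : R -> R) (h : R) : Prop :=
  exists x y : R, 0 <= x /\ 0 <= y /\ x != y /\ g x = h /\ g y = h.

(* If s and s' are equilibria and T is the set of resources that are strictly
   costlier under s' than under s, then every demand that s' sends into T is
   sent entirely into T by s (its s-support is no costlier than T).  So s'
   loads T at most as much as s does, whereas monotonicity of the costs forces
   s' to load every resource of T strictly more: T is empty, and equilibrium
   costs are unique.  The same transfer argument applied to a level set of the
   common cost shows that s and s' put the same total load on it; hence if
   some resource gains load, another resource of the same cost loses load, and
   both cost functions have a plateau at that height. *)
From HB Require Import structures.
From mathcomp Require Import all_boot all_order all_algebra.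
Import Order.TTheory GRing.Theory Num.Theory.
Local Open Scope ring_scope.
Set Implicit Arguments. Unset Strict Implicit.

Section Equilibria.

Variables (R : realFieldType) (n : nat) (f : 'I_n -> R -> R) (mu : {set 'I_n} -> R).

Implicit Types (s t : {set 'I_n} -> 'I_n -> R) (S : {set 'I_n}) (T : pred 'I_n).

Lemma profile_support s S j :
  is_profile mu s -> S != set0 -> 0 < s S j -> j \in S.
Proof.
move=> sP S0; apply: contraTT => jS.
by have [_ [s0 _]] := sP S S0; rewrite s0 ?ltxx.
Qed.

Lemma load_ge0 s j : is_profile mu s -> 0 <= load s j.
Proof. by move=> sP; apply: sumr_ge0 => S S0; have [] := sP S S0. Qed.

Definition support_closed s s' T :=
  forall S, S != set0 -> forall k j, T k -> 0 < s' S k -> 0 < s S j -> T j.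

Lemma profile_mass_closed_le s s' S T :
  is_profile mu s -> is_profile mu s' -> support_closed s s' T -> S != set0 ->
  \sum_(j | T j) s' S j <= \sum_(j | T j) s S j.
Proof.
move=> sP s'P closedT S0.
have [s_ge0 [_ s_sum]] := sP S S0; have [s'_ge0 [_ s'_sum]] := s'P S S0.
have [k /andP[Tk s'Sk] | s'T0] := pickP (fun k => T k && (0 < s' S k)).
  have -> : \sum_(j | T j) s S j = mu S.
    rewrite -s_sum (bigID T predT) /= [X in _ + X]big1 ?addr0 // => j Tj.
    apply/eqP; rewrite eq_le s_ge0 andbT leNgt.
    by apply: contraNN Tj => /(closedT S S0 k j Tk s'Sk).
  by rewrite -s'_sum (bigID T predT) /= lerDl sumr_ge0.
rewrite big1 ?sumr_ge0 // => j Tj.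
apply/eqP; rewrite eq_le s'_ge0 andbT leNgt.
by have := s'T0 j; rewrite Tj /= => ->.
Qed.

Lemma load_closed_le s s' T :
  is_profile mu s -> is_profile mu s' -> support_closed s s' T ->
  \sum_(j | T j) load s' j <= \sum_(j | T j) load s j.
Proof.
move=> sP s'P closedT; rewrite /load exchange_big [X in _ <= X]exchange_big /=.
by apply: ler_sum => S; apply: profile_mass_closed_le.
Qed.

Lemma plateau_height_cost s s' j :
  is_profile mu s -> is_profile mu s' ->
  load s j != load s' j -> cost f s j = cost f s' j ->
  plateau_height (f j) (cost f s j).
Proof.
move=> sP s'P neq_load eq_cost; exists (load s j), (load s' j).
by do !split => //; [exact: load_ge0 sP | exact: load_ge0 s'P].
Qed.

Lemma nash_support_cost_le s s' S k j :
  is_nash f mu s -> is_profile mu s' -> S != set0 ->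
  0 < s S k -> 0 < s' S j -> cost f s k <= cost f s j.
Proof.
by move=> [_ sN] s'P S0 sSk s'Sj; exact: sN S S0 k j sSk (profile_support s'P S0 s'Sj).
Qed.

Hypothesis f_mono : forall j, nondecr_nonneg (f j).

Lemma nash_cost_le s s' j :
  is_nash f mu s -> is_nash f mu s' -> cost f s' j <= cost f s j.
Proof.
move=> sN s'N; rewrite leNgt; apply/negP => costj.
pose T := [pred i | cost f s i < cost f s' i].
have load_lt i : T i -> load s i < load s' i.
  rewrite inE ltNge; apply: contraNT; rewrite -leNgt => le_load.
  by apply: f_mono le_load; apply: load_ge0 s'N.1.
have closedT : support_closed s s' T.
  move=> S S0 k i Tk s'Sk sSi; rewrite inE.
  apply: le_lt_trans (nash_support_cost_le sN s'N.1 S0 sSi s'Sk) _.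
  exact: lt_le_trans Tk (nash_support_cost_le s'N sN.1 S0 s'Sk sSi).
have := load_closed_le sN.1 s'N.1 closedT; apply/negP; rewrite -ltNge.
by apply: ltr_sum => [|i /load_lt//]; apply/hasP; exists j; rewrite ?mem_index_enum.
Qed.

Lemma nash_cost_eq s s' :
  is_nash f mu s -> is_nash f mu s' -> cost f s =1 cost f s'.
Proof. by move=> sN s'N j; apply/le_anti; rewrite !nash_cost_le. Qed.

Lemma nash_support_cost_eq s s' S k k' :
  S != set0 -> is_nash f mu s -> is_nash f mu s' ->
  0 < s S k -> 0 < s' S k' -> cost f s k = cost f s' k'.
Proof.
move=> S0 sN s'N sSk s'Sk'; apply/le_anti/andP; split.
  rewrite -(nash_cost_eq sN s'N k').
  exact: nash_support_cost_le sN s'N.1 S0 sSk s'Sk'.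
rewrite (nash_cost_eq sN s'N k).
exact: nash_support_cost_le s'N sN.1 S0 s'Sk' sSk.
Qed.

Lemma nash_level_load_eq s s' c :
  is_nash f mu s -> is_nash f mu s' ->
  \sum_(j | cost f s j == c) load s j = \sum_(j | cost f s j == c) load s' j.
Proof.
move=> sN s'N; pose T := [pred j | cost f s j == c].
have closedT t t' : is_nash f mu t -> is_nash f mu t' -> support_closed t t' T.
  move=> tN t'N S S0 k j /eqP ck t'Sk tSj; rewrite inE -ck.
  rewrite (nash_cost_eq sN tN j) (nash_cost_eq sN tN k).
  rewrite eq_le (nash_support_cost_le tN t'N.1 S0 tSj t'Sk) /=.
  rewrite (nash_cost_eq tN t'N k) (nash_cost_eq tN t'N j).
  exact: nash_support_cost_le t'N tN.1 S0 t'Sk tSj.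
apply/le_anti; rewrite (load_closed_le s'N.1 sN.1 (closedT _ _ s'N sN)).
by rewrite (load_closed_le sN.1 s'N.1 (closedT _ _ sN s'N)).
Qed.

Lemma nash_load_lt_plateau s s' j :
  is_nash f mu s -> is_nash f mu s' -> load s j < load s' j ->
  exists2 j', j' != j &
    plateau_height (f j) (cost f s j) /\ plateau_height (f j') (cost f s j).
Proof.
move=> sN s'N load_lt.
have [j' /and3P[/eqP cj' j'j load_gt] | noj'] :=
  pickP (fun i => [&& cost f s i == cost f s j, i != j & load s' i < load s i]).
  exists j' => //; split.
    apply: plateau_height_cost sN.1 s'N.1 _ (nash_cost_eq sN s'N j).
    by rewrite lt_eqF.
  rewrite -cj'; apply: plateau_height_cost sN.1 s'N.1 _ (nash_cost_eq sN s'N j').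
  by rewrite gt_eqF.
exfalso; have := nash_level_load_eq (cost f s j) sN s'N; apply/eqP; rewrite lt_eqF //.
rewrite (bigD1 j) ?eqxx // [X in _ < X](bigD1 j) ?eqxx //=.
apply: ltr_leD => //; apply: ler_sum => i /andP[ci ij].
by rewrite leNgt; have := noj' i; rewrite ci ij /= => ->.
Qed.

End Equilibria.

Theorem mainTheorem3 (R : realFieldType) (n : nat)
  (f : 'I_n -> R -> R) (mu : {set 'I_n} -> R) :
  is_game f mu ->
  (forall (S : {set 'I_n}) (s s' : {set 'I_n} -> 'I_n -> R) (k k' : 'I_n),
     S != set0 -> is_nash f mu s -> is_nash f mu s' ->
     0 < s S k -> 0 < s' S k' -> cost f s k = cost f s' k') /\
  ((~ exists (h : R) (j j' : 'I_n),
        j != j' /\ plateau_height (f j) h /\ plateau_height (f j') h) ->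
   forall (s s' : {set 'I_n} -> 'I_n -> R),
     is_nash f mu s -> is_nash f mu s' -> forall j : 'I_n, load s j = load s' j).
Proof.
move=> [f_mono _]; split.
  by move=> S s s' k k'; apply: (nash_support_cost_eq f_mono).
move=> no_shared_plateau s s' sN s'N j.
have plateau t t' : is_nash f mu t -> is_nash f mu t' -> ~ load t j < load t' j.
  move=> tN t'N /(nash_load_lt_plateau f_mono tN t'N)[j' j'j [pj pj']].
  by apply: no_shared_plateau; exists (cost f t j), j, j'; rewrite eq_sym.
case: (ltgtP (load s j) (load s' j)) => //.
  by move/(plateau _ _ sN s'N).
by move/(plateau _ _ s'N sN).
Qed.
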